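(* Let $M$ be a graded finitely generated graded multiplication $R$-module and $L$ a graded weakly $J_{gr}$-semiprime ideal of $R$ with $\mathrm{ann}_R(M)\subseteq L$. Then $LM$ is a graded weakly $J_{gr}$-semiprime submodule of $M$.
   Context: Standing conventions: $\Gamma$ is a group, $R=\bigoplus_{g\in\Gamma}R_g$ is a commutative $\Gamma$-graded ring with identity, and $M=\bigoplus_{g\in\Gamma}M_g$ is a unitary $\Gamma$-graded $R$-module. $h(R)$, $h(M)$ are the homogeneous elements. A submodule $U$ is graded if $U=\bigoplus_g(U\cap M_g)$; graded ideals are graded submodules of $R$. $M$ is graded finitely generated if $M=Ra_1+\dots+Ra_n$ with $a_i\in h(M)$; $M$ is a graded multiplication module if every graded submodule equals $KM$ for some graded ideal $K$ of $R$. $\mathrm{ann}_R(M)=\{r\in R: rM=0\}$. A graded submodule $U\neq N$ of a graded module $N$ is Gr-maximal if every graded submodule between $U$ and $N$ equals $U$ or $N$; $J_{gr}(N)$ is the intersection of all Gr-maximal submodules of $N$ ($=N$ if none); $J_{gr}(R)$ is this for $N=R$. A proper graded submodule $U$ of $M$ is graded weakly $J_{gr}$-semiprime if whenever $r_g\in h(R)$, $m_h\in h(M)$, $n\in\mathbb{Z}^+$ and $0\neq r_g^nm_h\in U$, then $r_gm_h\in U+J_{gr}(M)$; a graded ideal of $R$ is graded weakly $J_{gr}$-semiprime if it is so as a submodule of the graded $R$-module $R$. *)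

From mathcomp Require Import all_boot all_algebra.
From mathcomp Require Import monoid.

Set Implicit Arguments.
Unset Strict Implicit.
Unset Printing Implicit Defensive.

Import GRing.Theory.
Local Open Scope ring_scope.

Section Graded.

Variable G : groupType.
Variable R : comPzRingType.

(* A family (V_g)_{g ∈ G} of additive subgroups of V with V = ⊕_g V_g:
   every element is a finite sum of components from distinct V_g, and
   such sums are independent. *)
Definition is_grading (V : zmodType) (Vg : G -> V -> Prop) : Prop :=
  [/\ (forall g, Vg g 0 /\ forall x y, Vg g x -> Vg g y -> Vg g (x - y)),
      (forall v : V, exists (s : seq G) (x : G -> V),
          [/\ uniq s, (forall g, g \in s -> Vg g (x g)) & v = \sum_(g <- s) x g])
    & (forall (s : seq G) (x : G -> V), uniq s ->
          (forall g, g \in s -> Vg g (x g)) ->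
          \sum_(g <- s) x g = 0 -> forall g, g \in s -> x g = 0)].

Definition graded_ring (Rg : G -> R -> Prop) : Prop :=
  is_grading Rg /\
  forall g h (r s : R), Rg g r -> Rg h s -> Rg (g * h)%g (r * s).

Definition graded_module (V : lmodType R) (Rg : G -> R -> Prop)
    (Vg : G -> V -> Prop) : Prop :=
  is_grading Vg /\
  forall g h (r : R) (m : V), Rg g r -> Vg h m -> Vg (g * h)%g (r *: m).

Definition homogeneous (V : Type) (Vg : G -> V -> Prop) (v : V) : Prop :=
  exists g, Vg g v.

Definition submodule (V : lmodType R) (U : V -> Prop) : Prop :=
  [/\ U 0, (forall x y, U x -> U y -> U (x + y))
    & (forall (r : R) x, U x -> U (r *: x))].

Definition graded_submodule (V : lmodType R) (Vg : G -> V -> Prop)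
    (U : V -> Prop) : Prop :=
  submodule U /\
  forall u, U u -> exists (s : seq G) (x : G -> V),
    [/\ uniq s, (forall g, g \in s -> Vg g (x g) /\ U (x g))
      & u = \sum_(g <- s) x g].

Definition graded_ideal (Rg : G -> R -> Prop) (I : R -> Prop) : Prop :=
  @graded_submodule R^o Rg I.

Definition Gr_maximal (V : lmodType R) (Vg : G -> V -> Prop)
    (U : V -> Prop) : Prop :=
  [/\ graded_submodule Vg U, (exists v, ~ U v)
    & forall W : V -> Prop, graded_submodule Vg W ->
        (forall v, U v -> W v) ->
        (forall v, W v <-> U v) \/ (forall v, W v)].

(* J_gr(V): intersection of all Gr-maximal submodules (= V if none). *)
Definition Jgr (V : lmodType R) (Vg : G -> V -> Prop) (v : V) : Prop :=
  forall U, Gr_maximal Vg U -> U v.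

Definition gr_weakly_Jgr_semiprime (V : lmodType R) (Rg : G -> R -> Prop)
    (Vg : G -> V -> Prop) (U : V -> Prop) : Prop :=
  [/\ graded_submodule Vg U, (exists v, ~ U v)
    & forall (r : R) (m : V) (n : nat),
        homogeneous Rg r -> homogeneous Vg m -> (0 < n)%N ->
        r ^+ n *: m <> 0 -> U (r ^+ n *: m) ->
        exists u j, [/\ U u, Jgr Vg j & r *: m = u + j]].

Definition gr_weakly_Jgr_semiprime_ideal (Rg : G -> R -> Prop)
    (L : R -> Prop) : Prop :=
  @gr_weakly_Jgr_semiprime R^o Rg Rg L.

Definition prod_ideal_mod (V : lmodType R) (K : R -> Prop) (v : V) : Prop :=
  exists s : seq (R * V),
    (forall p, p \in s -> K p.1) /\ v = \sum_(p <- s) p.1 *: p.2.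

Definition gr_finitely_generated (V : lmodType R) (Vg : G -> V -> Prop) : Prop :=
  exists a : seq V, (forall x, x \in a -> homogeneous Vg x) /\
    forall v : V, exists c : 'I_(size a) -> R,
      v = \sum_(i < size a) c i *: a`_i.

Definition gr_multiplication (V : lmodType R) (Rg : G -> R -> Prop)
    (Vg : G -> V -> Prop) : Prop :=
  forall U, graded_submodule Vg U ->
    exists K, graded_ideal Rg K /\ forall v, U v <-> prod_ideal_mod K v.

Definition ann (V : lmodType R) (r : R) : Prop := forall v : V, r *: v = 0.

End Graded.

From mathcomp Require Import all_boot all_algebra.
From mathcomp Require Import ring.
From Stdlib Require Import Classical.

(* Let r, m be homogeneous with r^n m ∈ L M.  Since M is a multiplication
   module, the graded cyclic submodule R m equals K M for a graded ideal K.
   For homogeneous k ∈ K, r^n k M ⊆ r^n R m ⊆ L M, so the determinant trick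
   (Cayley-Hamilton for the t generators of M, using ann(M) ⊆ L) gives
   (r^n k)^t ∈ L, hence (r k)^(n t) ∈ L.  Then r k ∈ L + J_gr(R): if
   (r k)^(n t) = 0, r k is a homogeneous nilpotent and lies in every
   Gr-maximal ideal; otherwise this is the semiprimeness of L.  Writing m as a
   sum of k p with k ∈ K homogeneous gives r m ∈ L M + J_gr(R) M, and
   J_gr(R) M ⊆ J_gr(M) because (N : y) is a Gr-maximal ideal whenever N is a
   Gr-maximal submodule and y ∉ N is homogeneous. *)

Set Implicit Arguments.
Unset Strict Implicit.
Unset Printing Implicit Defensive.

Import GRing.Theory.
Local Open Scope ring_scope.

Definition plus_set (V : zmodType) (A B : V -> Prop) (v : V) : Prop :=
  exists a b, [/\ A a, B b & v = a + b].

Section GradingFacts.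
Variables (G : groupType) (V : zmodType) (Vg : G -> V -> Prop).
Hypothesis HV : is_grading Vg.

Lemma grading0 g : Vg g 0.
Proof. by case: HV => H _ _; case: (H g). Qed.

Lemma gradingB g x y : Vg g x -> Vg g y -> Vg g (x - y).
Proof. by case: HV => H _ _; case: (H g) => _; apply. Qed.

Lemma gradingD g x y : Vg g x -> Vg g y -> Vg g (x + y).
Proof.
move=> hx hy; rewrite -[y]opprK; apply: gradingB => //.
by rewrite -sub0r; apply: gradingB => //; apply: grading0.
Qed.

Lemma grading_decomp v : exists (s : seq G) (x : G -> V),
  [/\ uniq s, (forall g, g \in s -> Vg g (x g)) & v = \sum_(g <- s) x g].
Proof. by case: HV => _ H _; apply: H. Qed.

Lemma sum_extend_by_zero (F : G -> V) (s u : seq G) : uniq s -> uniq u ->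
  {subset s <= u} ->
  \sum_(g <- u) (if g \in s then F g else 0) = \sum_(g <- s) F g.
Proof.
move=> us uu su; rewrite -big_mkcond /= -big_filter.
apply: perm_big; apply: uniq_perm; [exact: filter_uniq | exact: us |].
by move=> g; rewrite mem_filter; case gs: (g \in s) => //=; apply: su.
Qed.

Lemma decomp_unique (s t : seq G) (x y : G -> V) : uniq s -> uniq t ->
  (forall g, g \in s -> Vg g (x g)) -> (forall g, g \in t -> Vg g (y g)) ->
  \sum_(g <- s) x g = \sum_(g <- t) y g ->
  forall g, (if g \in s then x g else 0) = (if g \in t then y g else 0).
Proof.
move=> us ut hx hy e g.
pose u := undup (s ++ t).
have su : {subset s <= u} by move=> h hh; rewrite mem_undup mem_cat hh.
have tu : {subset t <= u} by move=> h hh; rewrite mem_undup mem_cat hh orbT.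
pose d h := (if h \in s then x h else 0) - (if h \in t then y h else 0).
have hd h : h \in u -> Vg h (d h).
  move=> _; apply: gradingB.
    by case: ifP => hs; [apply: hx | apply: grading0].
  by case: ifP => hs; [apply: hy | apply: grading0].
have sum_d : \sum_(h <- u) d h = 0.
  by rewrite sumrB !sum_extend_by_zero ?undup_uniq // e subrr.
case: HV => _ _ indep.
case gu: (g \in u).
  by apply/eqP; rewrite -subr_eq0; apply/eqP; apply: indep sum_d g gu;
    [exact: undup_uniq | exact: hd].
have -> : (g \in s) = false by apply/negP => /su; rewrite gu.
by have -> : (g \in t) = false by apply/negP => /tu; rewrite gu.
Qed.

Definition hom_sums (U : V -> Prop) (v : V) : Prop :=
  exists l : seq (G * V), (forall p, p \in l -> Vg p.1 p.2 /\ U p.2) /\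
    v = \sum_(p <- l) p.2.

Lemma hom_sums1 (U : V -> Prop) g v : Vg g v -> U v -> hom_sums U v.
Proof.
move=> h1 h2; exists [:: (g, v)]; split; last by rewrite big_seq1.
by move=> p; rewrite inE => /eqP ->.
Qed.

Lemma hom_sumsD (U : V -> Prop) a b : hom_sums U a -> hom_sums U b -> hom_sums U (a + b).
Proof.
move=> [l1 [h1 ->]] [l2 [h2 ->]]; exists (l1 ++ l2); split; last by rewrite big_cat.
by move=> p; rewrite mem_cat => /orP [/h1|/h2].
Qed.

Lemma hom_sums_big (U : V -> Prop) (I : eqType) (r : seq I) (F : I -> V) :
  (forall i, i \in r -> hom_sums U (F i)) -> hom_sums U (\sum_(i <- r) F i).
Proof.
move=> h; rewrite big_seq; apply: big_ind => //; last exact: hom_sumsD.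
by exists [::]; rewrite big_nil.
Qed.

Lemma hom_sums_regroup (U : V -> Prop) : U 0 -> (forall a b, U a -> U b -> U (a + b)) ->
  forall v, hom_sums U v ->
  exists (s : seq G) (x : G -> V), [/\ uniq s,
    (forall g, g \in s -> Vg g (x g) /\ U (x g)) & v = \sum_(g <- s) x g].
Proof.
move=> U0 UD _ [l [hl ->]]; elim: l hl => [|p l IH] hl.
  by exists [::], (fun _ => 0); split => //; rewrite !big_nil.
have [|s [x [us hsx e]]] := IH.
  by move=> q ql; apply: hl; rewrite inE ql orbT.
have [hp1 hp2] : Vg p.1 p.2 /\ U p.2 by apply: hl; rewrite inE eqxx.
case ps: (p.1 \in s).
  exists s, (fun g => if g == p.1 then p.2 + x g else x g); split => //.
    move=> g gs; case: eqP => [->|_]; last exact: hsx.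
    have [h1 h2] := hsx _ ps; split; [exact: gradingD | exact: UD].
  rewrite big_cons e (bigD1_seq p.1 ps us) [RHS](bigD1_seq p.1 ps us) /= eqxx.
  by rewrite addrA; congr (_ + _); apply: eq_bigr => g /negPf ->.
exists (p.1 :: s), (fun g => if g == p.1 then p.2 else x g); split.
- by rewrite /= ps.
- by move=> g; rewrite inE; case: eqP => [->|_] //= gs; apply: hsx.
rewrite big_cons big_cons eqxx e; congr (_ + _).
by apply: eq_big_seq => g gs; case: eqP => // eg; move: gs; rewrite eg ps.
Qed.

End GradingFacts.

Section SubmoduleFacts.
Variables (R : comPzRingType) (V : lmodType R) (U : V -> Prop).
Hypothesis HU : submodule U.

Lemma sub0 : U 0. Proof. by case: HU. Qed.
Lemma subD x y : U x -> U y -> U (x + y). Proof. by case: HU => _ h _; apply: h. Qed.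
Lemma subZ r x : U x -> U (r *: x). Proof. by case: HU => _ _ h; apply: h. Qed.
Lemma subB x y : U x -> U y -> U (x - y).
Proof. by move=> hx hy; apply: subD => //; rewrite -scaleN1r; apply: subZ. Qed.

Lemma sub_sum (I : Type) (r : seq I) (P : pred I) (F : I -> V) :
  (forall i, P i -> U (F i)) -> U (\sum_(i <- r | P i) F i).
Proof. by move=> h; apply: big_ind => //; [apply: sub0 | apply: subD]. Qed.

End SubmoduleFacts.

Lemma plus_set_submodule (R : comPzRingType) (V : lmodType R) (A B : V -> Prop) :
  submodule A -> submodule B -> submodule (plus_set A B).
Proof.
move=> hA hB; split.
- by exists 0, 0; split; [apply: sub0 hA | apply: sub0 hB | rewrite addr0].
- move=> _ _ [a1 [b1 [h1 h2 ->]]] [a2 [b2 [h3 h4 ->]]].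
  by exists (a1 + a2), (b1 + b2); split; [apply: subD | apply: subD | rewrite addrACA].
- move=> r _ [a [b [h1 h2 ->]]].
  by exists (r *: a), (r *: b); split; [apply: subZ | apply: subZ | rewrite scalerDr].
Qed.

Section IdealFacts.
Variables (R : comPzRingType) (I : R -> Prop).
Hypothesis HI : @submodule R R^o I.

Lemma ideal_mull r x : I x -> I (r * x). Proof. exact: (subZ HI). Qed.
Lemma ideal_mulr r x : I x -> I (x * r). Proof. by rewrite mulrC; apply: ideal_mull. Qed.

Lemma ideal_full x : I 1 -> I x.
Proof. by move=> h; rewrite -[x]mulr1; apply: ideal_mull. Qed.

End IdealFacts.

Section GradedRing.
Variables (G : groupType) (R : comPzRingType) (Rg : G -> R -> Prop).
Hypothesis HR : graded_ring Rg.

Lemma ring_grading : is_grading Rg. Proof. by case: HR. Qed.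

Lemma homog_mul g h r s : Rg g r -> Rg h s -> Rg (g * h)%g (r * s).
Proof. by case: HR => _; apply. Qed.

Lemma ring_graded_module : graded_module (V:=R^o) Rg Rg.
Proof. by split; [exact: ring_grading | move=> *; exact: homog_mul]. Qed.

Lemma graded_ideal_full : graded_ideal Rg (fun _ => True).
Proof.
split; first by split.
move=> u _; have [s [x [us hx e]]] := grading_decomp ring_grading u.
by exists s, x; split => // g gs; split => //; apply: hx.
Qed.

(* If 1 = Σ_g e_g is the homogeneous decomposition of 1, then each component
   e_g with g ≠ 1 kills every homogeneous element: x = Σ_g x e_g is a
   decomposition of x, whose only possibly nonzero component has degree deg x. *)
Lemma one_components_kill (s : seq G) (e : G -> R) : uniq s ->
  (forall g, g \in s -> Rg g (e g)) -> 1 = \sum_(g <- s) e g ->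
  forall x h g, Rg h x -> g \in s -> g != 1%g -> x * e g = 0.
Proof.
move=> us he e1 x h g hx gs g1.
have := decomp_unique ring_grading (s := [:: h]) (t := map (fun g => (h * g)%g) s)
  (x := fun _ => x) (y := fun k => x * e (h^-1 * k)%g) isT.
move=> /(_ _ _ _ _ (h * g)%g).
rewrite (map_inj_uniq (mulgI h)) us mem_map ?gs; last exact: (mulgI h).
rewrite mulKg inE.
have -> : ((h * g)%g == h) = false.
  apply/negP => /eqP hg; move/negP: g1; apply; apply/eqP.
  by apply: (mulgI h); rewrite hg mulg1.
move=> H; symmetry; apply: H => //.
- by move=> k; rewrite inE => /eqP ->.
- by move=> k /mapP [g' g's ->]; rewrite mulKg; apply: homog_mul => //; apply: he.
by rewrite big_seq1 big_map; under eq_bigr do rewrite mulKg; rewrite -mulr_sumr -e1 mulr1.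
Qed.

Lemma one_homog : Rg 1%g 1.
Proof.
have [s [e [us he e1]]] := grading_decomp ring_grading (1 : R).
have e_vanish g : g \in s -> g != 1%g -> e g = 0.
  move=> gs g1; rewrite -[e g]mul1r e1 mulr_suml big_seq big1 // => g' g's.
  exact: (one_components_kill us he e1 (he _ g's)).
case s1: (1%g \in s).
  rewrite e1 (bigD1_seq 1%g s1 us) /= big_seq_cond big1 ?addr0; first exact: he.
  by move=> g /andP [gs g1]; apply: e_vanish.
rewrite e1 big_seq big1; first exact: grading0 ring_grading _.
by move=> g gs; apply: e_vanish => //; apply/negP => /eqP eg; rewrite -eg gs in s1.
Qed.

Section GradedModule.
Variables (V : lmodType R) (Vg : G -> V -> Prop).
Hypothesis HM : graded_module Rg Vg.

Lemma module_grading : is_grading Vg. Proof. by case: HM. Qed.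

Lemma homog_scale g h r m : Rg g r -> Vg h m -> Vg (g * h)%g (r *: m).
Proof. by case: HM => _; apply. Qed.

Lemma graded_submodule_of_hom_sums (U : V -> Prop) :
  submodule U -> (forall u, U u -> hom_sums Vg U u) -> graded_submodule Vg U.
Proof.
move=> hU H; split=> // u /H.
exact: (hom_sums_regroup module_grading (sub0 hU) (subD hU)).
Qed.

Definition span_add (W : R -> Prop) (y : V) (N : V -> Prop) (v : V) : Prop :=
  exists a n, [/\ W a, N n & v = a *: y + n].

Lemma span_add_left (W : R -> Prop) {y : V} (N : V -> Prop) :
  submodule N -> W 1 -> span_add W y N y.
Proof. by move=> hN W1; exists 1, 0; split => //; [apply: sub0 | rewrite scale1r addr0]. Qed.

Lemma span_add_right (W : R -> Prop) {y : V} (N : V -> Prop) :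
  @submodule R R^o W -> forall v, N v -> span_add W y N v.
Proof. by move=> hW v Nv; exists 0, v; split => //; [apply: sub0 hW | rewrite scale0r add0r]. Qed.

Lemma span_add_graded (W : R -> Prop) (N : V -> Prop) (y : V) (h : G) :
  graded_ideal Rg W -> Vg h y -> graded_submodule Vg N ->
  graded_submodule Vg (span_add W y N).
Proof.
move=> [hW dW] hy [hN dN].
apply: graded_submodule_of_hom_sums.
  split.
  - by apply: span_add_right => //; apply: sub0.
  - move=> _ _ [a1 [n1 [h1 h2 ->]]] [a2 [n2 [h3 h4 ->]]].
    exists (a1 + a2), (n1 + n2); split; [exact: (subD hW) | exact: (subD hN) |].
    by rewrite scalerDl addrACA.
  - move=> r _ [a [n [h1 h2 ->]]]; exists (r * a), (r *: n); split.
    + exact: (subZ hW r h1).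
    + exact: subZ.
    by rewrite scalerDr scalerA.
move=> _ [a [n [ha hn ->]]]; apply: hom_sumsD.
  have [s [x [us hx ->]]] := dW a ha.
  rewrite scaler_suml; apply: hom_sums_big => g gs; have [h1 h2] := hx g gs.
  apply: (hom_sums1 (g := (g * h)%g)); first exact: homog_scale.
  by exists (x g), 0; split => //; [apply: sub0 | rewrite addr0].
have [s [x [us hx ->]]] := dN n hn.
apply: hom_sums_big => g gs; have [h1 h2] := hx g gs.
by apply: (hom_sums1 (g := g)) => //; apply: span_add_right.
Qed.

Lemma cyclic_graded h (m : V) : Vg h m -> graded_submodule Vg (fun v => exists b, v = b *: m).
Proof.
move=> hm; apply: graded_submodule_of_hom_sums.
  split.
  - by exists 0; rewrite scale0r.
  - by move=> _ _ [b ->] [c ->]; exists (b + c); rewrite scalerDl.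
  - by move=> r _ [b ->]; exists (r * b); rewrite scalerA.
move=> _ [b ->]; have [s [x [_ hx ->]]] := grading_decomp ring_grading b.
rewrite scaler_suml; apply: hom_sums_big => g gs.
by apply: (hom_sums1 (g := (g * h)%g)); [apply: homog_scale => //; apply: hx | exists (x g)].
Qed.

Lemma exists_homog_out (N : V -> Prop) : submodule N -> (exists v, ~ N v) ->
  exists g y, Vg g y /\ ~ N y.
Proof.
move=> hN [v nv]; apply: NNPP => H; apply: nv.
have [s [c [us hc ->]]] := grading_decomp module_grading v.
rewrite big_seq; apply: sub_sum => // g gs; apply: NNPP => ncg.
by apply: H; exists g, (c g); split => //; apply: hc.
Qed.

Definition colon (N : V -> Prop) (y : V) (s : R) : Prop := N (s *: y).

Lemma colon_submodule (N : V -> Prop) (y : V) : submodule N -> @submodule R R^o (colon N y).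
Proof.
move=> hN; split.
- by rewrite /colon scale0r; apply: sub0.
- by move=> a b ha hb; rewrite /colon scalerDl; apply: subD.
- by move=> r a ha; rewrite /colon /= -scalerA; apply: subZ.
Qed.

(* For homogeneous y of degree h, (N : y) is graded: if s y ∈ N then s_g y is
   the (g h)-component of s y, hence lies in the graded submodule N. *)
Lemma colon_graded (N : V -> Prop) (y : V) h :
  graded_submodule Vg N -> Vg h y -> graded_ideal Rg (colon N y).
Proof.
move=> gN hy; split; first exact: colon_submodule gN.1.
move=> u Nuy; have [t [c [ut hc eu]]] := grading_decomp ring_grading u.
exists t, c; split => // g gt; split; first exact: hc.
have [t' [n [ut' hn eu']]] := gN.2 _ Nuy.
have := decomp_unique module_grading (s := map (fun g => (g * h)%g) t) (t := t')
  (x := fun k => c (k * h^-1)%g *: y) (y := n).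
rewrite (map_inj_uniq (mulIg h)) ut ut' => /(_ isT isT) /(_ _ _ _ (g * h)%g).
rewrite (map_f (fun g => (g * h)%g) gt) mulgK /colon => H.
have <- : (if (g * h)%g \in t' then n (g * h)%g else 0) = c g *: y.
  symmetry; apply: H.
  + by move=> k /mapP [g' g't ->]; rewrite mulgK; apply: homog_scale => //; apply: hc.
  + by move=> k kt; case: (hn k kt).
  + by rewrite -eu' eu scaler_suml big_map; apply: eq_bigr => g' _; rewrite mulgK.
by case: ifP => kt; [case: (hn _ kt) | apply: sub0 gN.1].
Qed.

Lemma maximal_span (N : V -> Prop) (y : V) h : Gr_maximal Vg N -> Vg h y -> ~ N y ->
  forall v, span_add (fun _ => True) y N v.
Proof.
move=> [gN _ maxN] hy Ny.
have [H|//] := maxN _ (span_add_graded graded_ideal_full hy gN)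
  (span_add_right graded_ideal_full.1).
by exfalso; apply: Ny; apply/H; apply: span_add_left gN.1 _.
Qed.

(* If N is Gr-maximal and y is homogeneous outside N, then (N : y) is a
   Gr-maximal ideal: an element w ∉ (N : y) of a larger graded ideal W gives
   W y + N = M, so y = a y + n with a ∈ W, and then 1 - a ∈ (N : y) ⊆ W. *)
Lemma colon_maximal (N : V -> Prop) (y : V) h : Gr_maximal Vg N -> Vg h y -> ~ N y ->
  @Gr_maximal G R R^o Rg (colon N y).
Proof.
move=> [gN _ maxN] hy Ny.
split; [exact: colon_graded gN hy | by exists 1; rewrite /colon scale1r |].
move=> W gW sW; have hW := gW.1.
case: (classic (forall v, W v -> colon N y v)) => [H|H].
  by left => v; split; [apply: H | apply: sW].
right; have [w /(@imply_to_and (W w)) [Ww nPw]] := not_all_ex_not _ _ H.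
have [H2|H2] := maxN _ (span_add_graded gW hy gN) (span_add_right hW).
  by exfalso; apply: nPw; apply/H2; exists w, 0; split; [done | apply: sub0 gN.1 | by rewrite addr0].
have [a [n [Wa Nn ey]]] := H2 y.
have P1a : colon N y (1 - a) by rewrite /colon scalerBl scale1r {1}ey addrAC subrr add0r.
move=> v; apply: (ideal_full hW).
by rewrite -(subrK a 1); apply: (subD hW) => //; apply: sW.
Qed.

Lemma Jgr_submodule : submodule (Jgr Vg).
Proof.
split.
- by move=> N [[hN _] _ _]; apply: sub0 hN.
- by move=> x y hx hy N mN; have [[hN _] _ _] := mN; apply: (subD hN); [apply: hx | apply: hy].
- by move=> r x hx N mN; have [[hN _] _ _] := mN; apply: (subZ hN); apply: hx.
Qed.

(* J_gr(R) M ⊆ J_gr(M): given a Gr-maximal N, pick a homogeneous y ∉ N; then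
   j ∈ (N : y), which is Gr-maximal, and every x lies in R y + N. *)
Lemma Jgr_scale j (x : V) : Jgr (V:=R^o) Rg j -> Jgr Vg (j *: x).
Proof.
move=> hj N mN; have [gN pN _] := mN.
have [h [y [hy Ny]]] := exists_homog_out gN.1 pN.
have jy : N (j *: y) := hj _ (colon_maximal mN hy Ny).
have [a [n [_ Nn ->]]] := maximal_span mN hy Ny x.
by rewrite scalerDr scalerA mulrC -scalerA; apply: (subD gN.1); apply: (subZ gN.1).
Qed.

End GradedModule.

(* A homogeneous nilpotent w lies in every Gr-maximal ideal P: otherwise
   P + R w = R gives 1 = a w + n with n ∈ P, and n is then a unit, since
   n Σ_{i<N} (a w)^i = 1 - (a w)^N = 1. *)
Lemma nilpotent_in_Gr_maximal (P : R -> Prop) (w : R) h N :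
  @Gr_maximal G R R^o Rg P -> Rg h w -> w ^+ N = 0 -> P w.
Proof.
move=> mP hw wN; apply: NNPP => Pw.
have [gP [v nv] _] := mP.
have [a [n [_ Pn e]]] := maximal_span ring_graded_module mP hw Pw 1.
apply: nv; apply: (ideal_full gP.1).
have -> : 1 = n * \sum_(i < N) (a * w) ^+ i.
  have : (a * w) ^+ N - 1 = (a * w - 1) * \sum_(i < N) (a * w) ^+ i by rewrite subrX1.
  rewrite exprMn wN mulr0 sub0r => e2.
  have -> : n = 1 - a * w by rewrite e addrC addKr.
  by rewrite -opprB mulNr -e2 opprK.
exact: ideal_mulr gP.1 _ _ Pn.
Qed.

End GradedRing.

Section ProductSubmodule.
Variables (R : comPzRingType) (V : lmodType R) (K : R -> Prop).
Hypothesis HK : @submodule R R^o K.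

Lemma prod_ideal_mod0 : prod_ideal_mod (V:=V) K 0.
Proof. by exists [::]; rewrite big_nil. Qed.

Lemma prod_ideal_modD (x y : V) :
  prod_ideal_mod K x -> prod_ideal_mod K y -> prod_ideal_mod K (x + y).
Proof.
move=> [s1 [h1 ->]] [s2 [h2 ->]]; exists (s1 ++ s2); split; last by rewrite big_cat.
by move=> p; rewrite mem_cat => /orP [/h1|/h2].
Qed.

Lemma prod_ideal_mod1 k (v : V) : K k -> prod_ideal_mod K (k *: v).
Proof.
move=> hk; exists [:: (k, v)]; split; last by rewrite big_seq1.
by move=> p; rewrite inE => /eqP ->.
Qed.

Lemma prod_ideal_modZ r (x : V) : prod_ideal_mod K x -> prod_ideal_mod K (r *: x).
Proof.
move=> [s [hs ->]]; rewrite scaler_sumr big_seq; apply: big_ind.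
- exact: prod_ideal_mod0.
- exact: prod_ideal_modD.
by move=> p ps; rewrite scalerA; apply: prod_ideal_mod1; apply: ideal_mull (hs p ps).
Qed.

Lemma prod_ideal_mod_submodule : submodule (prod_ideal_mod (V:=V) K).
Proof. by split; [exact: prod_ideal_mod0 | exact: prod_ideal_modD | exact: prod_ideal_modZ]. Qed.

End ProductSubmodule.

(* Adjugate argument: if the square matrix B annihilates the column vector x,
   then \det B kills every entry of x, since \det B = adj(B) B. *)
Lemma det_annihilates (R : comPzRingType) (V : lmodType R) n (B : 'M[R]_n)
    (x : 'I_n -> V) :
  (forall i, \sum_j B i j *: x j = 0) -> forall k, \det B *: x k = 0.
Proof.
move=> hrow k.
have -> : \det B *: x k = \sum_j ((\det B)%:M : 'M_n) k j *: x j.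
  rewrite (bigD1 k) //= mxE eqxx mulr1n big1 ?addr0 //.
  by move=> j jk; rewrite mxE eq_sym (negPf jk) mulr0n scale0r.
rewrite -mul_adj_mx; under eq_bigr do rewrite mxE scaler_suml.
rewrite exchange_big big1 // => i _; under eq_bigr do rewrite -scalerA.
by rewrite -scaler_sumr hrow scaler0.
Qed.

Section DeterminantModIdeal.
Variables (R : comPzRingType) (L : R -> Prop).
Hypothesis HL : @submodule R R^o L.

Lemma prod_sub_ideal (I : Type) (r : seq I) (F H : I -> R) :
  (forall i, L (H i)) -> L (\prod_(i <- r) (F i - H i) - \prod_(i <- r) F i).
Proof.
move=> hH; elim: r => [|i r IH]; first by rewrite !big_nil subrr; apply: sub0 HL.
rewrite !big_cons.
have -> : (F i - H i) * \prod_(j <- r) (F j - H j) - F i * \prod_(j <- r) F j =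
  F i * (\prod_(j <- r) (F j - H j) - \prod_(j <- r) F j) - H i * \prod_(j <- r) (F j - H j).
  by ring.
by apply: (subB HL); [apply: ideal_mull | apply: ideal_mulr].
Qed.

Lemma det_sub_ideal n (B A : 'M[R]_n) :
  (forall i j, L (A i j)) -> L (\det (B - A) - \det B).
Proof.
move=> hA; rewrite /determinant -sumrB; apply: (sub_sum HL) => s _.
rewrite -mulrBr; apply: (ideal_mull HL).
under eq_bigr do rewrite !mxE.
exact: prod_sub_ideal.
Qed.

End DeterminantModIdeal.

Section CayleyHamilton.
Variables (R : comPzRingType) (V : lmodType R) (a : seq V).
Hypothesis hgen :
  forall v : V, exists c : 'I_(size a) -> R, v = \sum_(i < size a) c i *: a`_i.
Variables (L : R -> Prop).
Hypothesis HL : @submodule R R^o L.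

Lemma prod_ideal_mod_coords (v : V) : prod_ideal_mod L v ->
  exists A : 'I_(size a) -> R, (forall j, L (A j)) /\ v = \sum_j A j *: a`_j.
Proof.
move=> [s [hs ->]]; elim: s hs => [|p s IH] hs.
  exists (fun _ => 0); split; first by move=> _; apply: sub0 HL.
  by rewrite big_nil big1 // => j _; rewrite scale0r.
have [|A [hA eA]] := IH; first by move=> q qs; apply: hs; rewrite inE qs orbT.
have [d ed] := hgen p.2.
have hp : L p.1 by apply: hs; rewrite inE eqxx.
exists (fun j => p.1 * d j + A j); split.
  by move=> j; apply: (subD HL) => //; apply: ideal_mulr.
rewrite big_cons eA {1}ed scaler_sumr -big_split; apply: eq_bigr => j _.
by rewrite scalerDl scalerA.
Qed.

(* Writing c a_i = Σ_j A_ij a_j with A_ij ∈ L, the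
   matrix c I - A annihilates the generators, so its determinant lies in
   ann(M) ⊆ L, and it is congruent to \det (c I) = c^t modulo L. *)
Lemma power_in_ideal c : (forall v : V, prod_ideal_mod L (c *: v)) ->
  (forall r, ann V r -> L r) -> L (c ^+ size a).
Proof.
move=> hc hann.
have [A hA] := fin_all_exists (fun i : 'I_(size a) => prod_ideal_mod_coords (hc a`_i)).
pose B : 'M_(size a) := c%:M - \matrix_(i, j) A i j.
have annB : ann V (\det B).
  have hrow i : \sum_j B i j *: a`_j = 0.
    under eq_bigr do rewrite !mxE scalerBl.
    rewrite sumrB -(proj2 (hA i)) (bigD1 i) //= eqxx mulr1n big1 ?addr0 ?subrr //.
    by move=> j ji; rewrite eq_sym (negPf ji) mulr0n scale0r.
  move=> v; have [d ->] := hgen v; rewrite scaler_sumr big1 // => i _.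
  by rewrite scalerA mulrC -scalerA (det_annihilates hrow) scaler0.
have congr_det : L (\det B - \det (c%:M : 'M_(size a))).
  by apply: det_sub_ideal => // i j; rewrite mxE; apply: (proj1 (hA i)).
rewrite -det_scalar -[X in L X](subKr (\det B)).
by apply: (subB HL) => //; apply: hann.
Qed.

End CayleyHamilton.

Section WeaklySemiprime.
Variables (G : groupType) (R : comPzRingType) (M : lmodType R).
Variables (Rg : G -> R -> Prop) (Mg : G -> M -> Prop) (L : R -> Prop).
Hypotheses (HR : graded_ring Rg) (HM : graded_module Rg Mg).

(* For a graded ideal L, L M is a graded submodule: it is spanned by the
   homogeneous products l_g m_h of components of l ∈ L and of m ∈ M. *)
Lemma prod_ideal_mod_graded :
  graded_ideal Rg L -> graded_submodule Mg (prod_ideal_mod (V:=M) L).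
Proof.
move=> gL; apply: (graded_submodule_of_hom_sums HM).
  exact: prod_ideal_mod_submodule gL.1.
move=> _ [s [hs ->]]; apply: hom_sums_big => p ps.
have [t [x [_ hx ->]]] := gL.2 _ (hs p ps).
have [t' [y [_ hy ->]]] := grading_decomp (module_grading HM) p.2.
rewrite scaler_suml; apply: hom_sums_big => g gt.
rewrite scaler_sumr; apply: hom_sums_big => h ht; have [hxg Lxg] := hx g gt.
apply: (hom_sums1 (g := (g * h)%g)); first by apply: (homog_scale HM) => //; apply: hy.
exact: prod_ideal_mod1.
Qed.

(* For finitely generated M with ann(M) ⊆ L, a proper ideal L gives a proper
   L M: L M = M would put 1 = 1^t in L by the determinant trick. *)
Lemma prod_ideal_mod_proper : gr_finitely_generated Mg -> @submodule R R^o L ->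
  (exists r, ~ L r) -> (forall r, ann M r -> L r) -> exists v : M, ~ prod_ideal_mod L v.
Proof.
move=> [a [_ hgen]] hL [r0 Lr0] hann; apply: NNPP => H.
have L1 : L (1 ^+ size a).
  apply: (power_in_ideal hgen hL) => // v.
  by apply: NNPP => h; apply: H; exists (1 *: v).
by apply: Lr0; apply: (ideal_full hL); rewrite -(expr1n _ (size a)).
Qed.

(* In a graded weakly J_gr-semiprime ideal L, a homogeneous w with some
   positive power in L lies in L + J_gr(R): if w^N = 0 then w is in every
   Gr-maximal ideal, otherwise apply the definition with m = 1. *)
Lemma homog_power_split (w : R) g N : gr_weakly_Jgr_semiprime_ideal Rg L ->
  Rg g w -> (0 < N)%N -> L (w ^+ N) -> plus_set L (Jgr (V:=R^o) Rg) w.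
Proof.
move=> [[hL _] _ wL] hw N0 LwN.
have [wN0|wN0] := eqVneq (w ^+ N) 0.
  exists 0, w; split; [exact: sub0 hL | | by rewrite add0r].
  by move=> P mP; exact: (nilpotent_in_Gr_maximal HR mP hw wN0).
have e1 x : x *: (1 : R^o) = x := mulr1 x.
have wN0' : w ^+ N <> 0 by apply/eqP.
have := wL w 1 N (ex_intro _ _ hw) (ex_intro _ _ (one_homog HR)) N0.
by rewrite !e1 => /(_ wN0' LwN).
Qed.

(* Let R m = K M for a graded ideal K, with r^n m ∈ L M.  For
   homogeneous k ∈ K we have r^n k M ⊆ r^n R m ⊆ L M, so (r^n k)^t ∈ L by the
   determinant trick; hence (r k)^(n t) ∈ L and r k ∈ L + J_gr(R). *)
Lemma homog_multiplier_split (r : R) (m : M) n (K : R -> Prop) (k : R) g :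
  gr_finitely_generated Mg -> gr_weakly_Jgr_semiprime_ideal Rg L ->
  (forall c, ann M c -> L c) -> homogeneous Rg r -> (0 < n)%N ->
  prod_ideal_mod L (r ^+ n *: m) ->
  (forall v, prod_ideal_mod K v -> exists b, v = b *: m) ->
  K k -> Rg g k -> plus_set L (Jgr (V:=R^o) Rg) (r * k).
Proof.
move=> [a [_ hgen]] wL hann [g' hr] n0 LMrm eK Kk hk.
have [[hL _] [x Lx] _] := wL.
have Lc : L ((r ^+ n * k) ^+ size a).
  apply: (power_in_ideal hgen hL) => // v.
  have [b e] := eK _ (prod_ideal_mod1 (V := M) v Kk).
  by rewrite -scalerA e scalerA mulrC -scalerA; apply: prod_ideal_modZ.
have t0 : (0 < size a)%N.
  rewrite lt0n; apply/negP => /eqP t0; apply: Lx; apply: (ideal_full hL).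
  by move: Lc; rewrite t0 expr0.
apply: (homog_power_split (N := n * size a) wL (homog_mul HR hr hk)).
  by rewrite muln_gt0 n0.
have -> : (r * k) ^+ (n * size a) = (r ^+ n * k) ^+ size a * k ^+ (n * size a - size a).
  by rewrite !exprMn -exprM -mulrA -exprD subnKC // leq_pmull.
exact: ideal_mulr.
Qed.

(* If m ∈ K M for a graded ideal K and r k ∈ L + J_gr(R) for all homogeneous
   k ∈ K, then r m ∈ L M + J_gr(M), using J_gr(R) M ⊆ J_gr(M). *)
Lemma scale_split_of_components (K : R -> Prop) (r : R) (m : M) :
  @submodule R R^o L -> graded_ideal Rg K -> prod_ideal_mod K m ->
  (forall k g, K k -> Rg g k -> plus_set L (Jgr (V:=R^o) Rg) (r * k)) ->
  plus_set (prod_ideal_mod L) (Jgr Mg) (r *: m).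
Proof.
move=> hL gK [s [hs ->]] split_k.
have hS := plus_set_submodule (prod_ideal_mod_submodule M hL) (Jgr_submodule Mg).
rewrite scaler_sumr big_seq; apply: (sub_sum hS) => p ps.
have [t [x [_ hx ->]]] := gK.2 _ (hs p ps).
rewrite scaler_suml scaler_sumr big_seq; apply: (sub_sum hS) => g gt.
have [hxg Kxg] := hx g gt.
have [u [j [Lu Jj ew]]] := split_k _ _ Kxg hxg.
exists (u *: p.2), (j *: p.2); split; [exact: prod_ideal_mod1 | exact: Jgr_scale HM _ _ Jj |].
by rewrite scalerA ew scalerDl.
Qed.

End WeaklySemiprime.

Theorem theorem2p17 (G : groupType) (R : comPzRingType) (M : lmodType R)
    (Rg : G -> R -> Prop) (Mg : G -> M -> Prop) (L : R -> Prop) :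
  graded_ring Rg ->
  graded_module Rg Mg ->
  gr_finitely_generated Mg ->
  gr_multiplication Rg Mg ->
  gr_weakly_Jgr_semiprime_ideal Rg L ->
  (forall r : R, ann M r -> L r) ->
  gr_weakly_Jgr_semiprime Rg Mg (prod_ideal_mod (V:=M) L).
Proof.
move=> HR HM fgM multM wL hann; case: (wL) => gL pL _.
split; [exact: prod_ideal_mod_graded HM gL | exact: prod_ideal_mod_proper fgM gL.1 pL hann |].
move=> r m n hr [h hm] n0 _ LMrm.
(* R m is graded, so R m = K M for some graded ideal K. *)
have [K [gK eK]] := multM _ (cyclic_graded HR HM hm).
apply: (scale_split_of_components HR HM gL.1 gK); first by apply/eK; exists 1; rewrite scale1r.
move=> k g Kk hk; apply: (homog_multiplier_split HR fgM wL hann hr n0 LMrm _ Kk hk).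
by move=> v /eK.
Qed.
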